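(* Let $\Sigma$ be a $(\lambda,\beta)$-set system on a finite set $V$. For every $S\in\Sigma$ with $|S|\ge 1/(\lambda-\lambda^2)$ and every $t\in S$, there exists a $t$-bound set $S'\in\Sigma$ with $\lambda^2|S|\le|S'|\le\lambda|S|$.
   Context: A set containing vertex $t$ is called $t$-bound. For $0<\lambda<1$, $\beta>1$, a collection $\Sigma$ of subsets of a finite set $V$ is a $(\lambda,\beta)$-set system if: (K1) $V\in\Sigma$; (K2) if $S\in\Sigma$ has $|S|>1$, then for every $t\in S$ there is a $t$-bound $S'\in\Sigma$ with $S'\subset S$ and $|S'|\ge\min\{\lambda|S|,|S|-1\}$; (K3) for every $v\in V$ and $L\ge2$, the union of all sets in $\Sigma$ containing $v$ of size at most $L$ has at most $\beta L$ elements. *)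

From mathcomp Require Import all_boot all_order all_algebra.
Set Implicit Arguments. Unset Strict Implicit. Unset Printing Implicit Defensive.
Import Order.TTheory GRing.Theory Num.Theory.
Local Open Scope ring_scope.

Definition set_system_K1 (V : finType) (Sigma : {set {set V}}) : Prop :=
  [set: V] \in Sigma.

Definition set_system_K2 (R : realFieldType) (V : finType) (lam : R)
    (Sigma : {set {set V}}) : Prop :=
  forall S : {set V}, S \in Sigma -> (1 < #|S|)%N ->
    forall t : V, t \in S ->
      exists S' : {set V}, [/\ S' \in Sigma, t \in S', S' \proper S &
        Num.min (lam * (#|S|)%:R) ((#|S|)%:R - 1) <= (#|S'|)%:R].

Definition set_system_K3 (R : realFieldType) (V : finType) (beta : R)
    (Sigma : {set {set V}}) : Prop :=
  forall (v : V) (L : R), 2 <= L ->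
    (#|\bigcup_(S in Sigma | (v \in S) && ((#|S|)%:R <= L)) S|)%:R <= beta * L.

Definition lambda_beta_set_system (R : realFieldType) (V : finType)
    (lam beta : R) (Sigma : {set {set V}}) : Prop :=
  [/\ (0 < lam) && (lam < 1), 1 < beta,
      set_system_K1 Sigma, set_system_K2 lam Sigma & set_system_K3 beta Sigma].

From mathcomp Require Import all_boot all_order all_algebra.
From mathcomp Require Import lra.
Import Order.TTheory GRing.Theory Num.Theory.
Local Open Scope ring_scope.

(* Shrink [S] with (K2) while keeping [t], until the size first drops to at
   most [x = lam |S|].  The last step left a set of size [m > x], so it lands
   at size at least [min (lam m) (m - 1) >= min (lam x) (x - 1)], and for
   [|S| >= 1 / (lam - lam^2)] this lower bound is at least [lam^2 |S|]. *)

Lemma set_system_K2_descent {R : realFieldType} {V : finType} {lam : R}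
    {Sigma : {set {set V}}} :
  0 <= lam -> set_system_K2 lam Sigma ->
  forall x : R, 1 <= x ->
  forall S : {set V}, S \in Sigma -> x < (#|S|)%:R ->
  forall t : V, t \in S ->
    exists S' : {set V}, [/\ S' \in Sigma, t \in S',
      Num.min (lam * x) (x - 1) <= (#|S'|)%:R & (#|S'|)%:R <= x].
Proof.
move=> lam_ge0 K2 x x_ge1 S; have [k] := ubnP #|S|.
elim: k S => // k IHk S S_lt_k SSigma x_lt_S t tS.
have S_gt1 : (1 < #|S|)%N by rewrite -(ltr_nat R); lra.
have [S' [S'Sigma tS' S'S S'_big]] := K2 S SSigma S_gt1 t tS.
case: (lerP (#|S'|)%:R x) => [S'_le_x | x_lt_S'].
  exists S'; split => //; apply: le_trans S'_big.
  have x_le_S := ltW x_lt_S.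
  by rewrite le_min !ge_min ler_wpM2l ?lerD2r ?x_le_S ?orbT.
apply: (IHk S' _ S'Sigma x_lt_S' t tS').
by rewrite -ltnS (leq_trans _ S_lt_k) // ltnS (proper_card S'S).
Qed.

Theorem proposition5 (R : realFieldType) (V : finType) (lam beta : R)
    (Sigma : {set {set V}}) :
  lambda_beta_set_system lam beta Sigma ->
  forall S : {set V}, S \in Sigma ->
    1 / (lam - lam ^+ 2) <= (#|S|)%:R ->
    forall t : V, t \in S ->
      exists S' : {set V}, [/\ S' \in Sigma, t \in S',
        lam ^+ 2 * (#|S|)%:R <= (#|S'|)%:R &
        (#|S'|)%:R <= lam * (#|S|)%:R].
Proof.
move=> [/andP[lam_gt0 lam_lt1] _ _ K2 _] S SSigma S_large t tS.
set n : R := (#|S|)%:R in S_large *.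
have gap_gt0 : 0 < lam - lam ^+ 2 by rewrite expr2; nra.
have gap : lam ^+ 2 * n + 1 <= lam * n.
  rewrite -(ler_pM2r gap_gt0) mul1r mulVf ?gt_eqF // in S_large.
  by rewrite expr2 in S_large *; nra.
have n_gt0 : 0 < n by rewrite expr2 in gap; nra.
have [||S' [S'Sigma tS' S'_ge S'_le]] :=
  set_system_K2_descent (ltW lam_gt0) K2 (lam * n) _ S SSigma _ t tS.
- by rewrite expr2 in gap; nra.
- by rewrite -[X in _ < X]mul1r ltr_pM2r.
exists S'; split => //; apply: le_trans S'_ge.
by rewrite le_min mulrA -expr2 lexx /=; lra.
Qed.
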